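(* Let $\mathfrak A$ be an associative $\mathcal A$-algebra with finite basis $B$ compatible with $1$ satisfying $P_1,P_2,P_3$, and let $\Phi:\mathfrak A\to\mathcal A\otimes_{\mathbb Z}\mathfrak A^\infty$ be as below (an $\mathcal A$-algebra homomorphism preserving $1$). Let $K$ be a field and $\mathcal A\to K$ a unital ring homomorphism; let $\Phi_K:\mathfrak A_K=K\otimes_{\mathcal A}\mathfrak A\to\mathfrak A^\infty_K=K\otimes_{\mathbb Z}\mathfrak A^\infty$ be the induced $K$-algebra homomorphism. If $\mathfrak A_K$ is a semisimple algebra, then $\Phi_K$ is an algebra isomorphism.
   Context: $\mathcal A=\mathbb Z[v,v^{-1}]$. $B$ compatible with $1$: $1=\sum_\mu1_\mu$ with distinct $1_\mu\in B$, orthogonal idempotents, and each $b\in B$ equal to $1_\mu b1_{\mu'}$ for some $\mu,\mu'$. Structure constants $r^{b''}_{b,b'}$ by $bb'=\sum r^{b''}_{b,b'}b''$. $b'\preceq b$ iff $b'$ lies in every $K\subset B$ containing $b$ whose $\mathcal A$-span is a two-sided ideal; two-sided cells: classes of $b\sim b'\iff b\preceq b'\preceq b$. $a(b)$: least $m\ge0$ with $v^{-m}r^{b''}_{b,b'}\in\mathbb Z[v^{-1}]$ for all $b',b''$ in the cell of $b$. $P_1$: $a$ constant on cells. $\mathfrak A^\infty$: ring with $\mathbb Z$-basis $t_b$, $t_bt_{b'}=\sum\gamma^{b''}_{b,b'}t_{b''}$ where $\gamma^{b''}_{b,b'}$ is the constant term of $v^{-a(b)}r^{b''}_{b,b'}$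 if $b,b',b''$ lie in one cell and $0$ otherwise. $P_2$: $\mathfrak A^\infty$ has unit $\sum_{b\in\mathcal D}t_b$, $\mathcal D\subset B$ (distinguished elements), compatible with the basis. $P_3$: for $b_2\sim b_4$, $\sum_{\beta\sim b_2}r^\beta_{b_1,b_2}(v)r^{b_4}_{\beta,b_3}(v')=\sum_{\beta\sim b_2}r^{b_4}_{b_1,\beta}(v)r^\beta_{b_2,b_3}(v')$. $\Phi(b)=\sum_{b_1\in\mathcal D,b_2\in B,b_1\sim b_2}r^{b_2}_{b,b_1}t_{b_2}$, extended $\mathcal A$-linearly. *)

From HB Require Import structures.
From mathcomp Require Import all_boot all_order all_algebra.
From mathcomp Require Import finmap.
Set Implicit Arguments.
Unset Strict Implicit.
Unset Printing Implicit Defensive.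
Import Order.TTheory GRing.Theory Num.Theory.
Local Open Scope ring_scope.


(* The ring  A = Z[v, v^{-1}].  A Laurent polynomial  f = sum_n f_n v^n  is  *)
(* encoded by its finitely supported coefficient function  n |-> f_n.       *)
Definition laurent := {fsfun int -> int with 0%R}.

Definition lmul (f g : laurent) (n : int) : int :=
  \sum_(i <- finsupp f) f i * g (n - i).

(* image of f under the unital ring homomorphism  A -> K,  v |-> u
   (every unital ring hom Z[v,v^-1] -> K is of this form, u a unit of K) *)
Definition lev (K : fieldType) (u : K) (f : laurent) : K :=
  \sum_(i <- finsupp f) (f i)%:~R * u ^ i.

Section Based.
Variable B : finType.
(* structure constants:  b * b' = sum_{b''} r b b' b'' . b''  *)
Variable r : B -> B -> B -> laurent.

Definition associative_sc : Prop :=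
  forall b b' b'' c (n : int),
    \sum_(be : B) lmul (r b b' be) (r be b'' c) n
    = \sum_(be : B) lmul (r b' b'' be) (r b be c) n.

(* B is compatible with 1:  1 = sum_{e in U} e  (the 1_mu are the distinct
   elements of U), the 1_mu are orthogonal idempotents, and every b equals
   1_mu b 1_mu' for some mu, mu'. *)
Definition compatible_with_one (U : {set B}) : Prop :=
  [/\ (forall b c (n : int),
         \sum_(e in U) r e b c n = ((c == b) && (n == 0))%:R),
      (forall b c (n : int),
         \sum_(e in U) r b e c n = ((c == b) && (n == 0))%:R),
      (forall e e' c (n : int), e \in U -> e' \in U ->
         r e e' c n = [&& e == e', c == e & n == 0]%:R) &
      (forall b, exists e, exists e', [/\ e \in U, e' \in U &
         (* e * (b * e') = b *)
         forall c (n : int),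
           \sum_(be : B) lmul (r b e' be) (r e be c) n
           = ((c == b) && (n == 0))%:R])].

Definition lzero (f : laurent) : bool := finsupp f == fset0 :> {fset int}.

(* the A-span of K is a two-sided ideal (checked on the basis: K.B and B.K
   lie in the span of K) *)
Definition span_ideal (K : {set B}) : bool :=
  [forall x, forall y, forall c, (x \in K) && (c \notin K) ==>
     lzero (r x y c) && lzero (r y x c)].

Definition preceq (b' b : B) : bool :=
  [forall K : {set B}, (b \in K) && span_ideal K ==> (b' \in K)].

Definition same_cell (b b' : B) : bool := preceq b b' && preceq b' b.

(* v^{-m} r^{b''}_{b,b'} lies in Z[v^{-1}] for all b', b'' in the cell of b *)
Definition a_bound (m : nat) (b : B) : Prop :=
  forall b' b'' (n : int), same_cell b b' -> same_cell b b'' ->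
    (m%:Z < n) -> r b b' b'' n = 0.

Definition is_a_function (a : B -> nat) : Prop :=
  forall b, a_bound (a b) b /\ (forall m, a_bound m b -> (a b <= m)%N).

Definition P1 (a : B -> nat) : Prop :=
  forall b b', same_cell b b' -> a b = a b'.

(* gamma^{b''}_{b,b'} : constant term of v^{-a(b)} r^{b''}_{b,b'} if
   b, b', b'' lie in one cell, 0 otherwise *)
Definition gamma (a : B -> nat) (b b' b'' : B) : int :=
  if same_cell b b' && same_cell b b'' then r b b' b'' (a b)%:Z else 0.

(* P2: the ring A^infty (Z-basis t_b, structure constants gamma) has unit
   sum_{d in D} t_d, and the basis {t_b} is compatible with this unit. *)
Definition P2 (a : B -> nat) (D : {set B}) : Prop :=
  [/\ (forall b c, \sum_(d in D) gamma a d b c = (c == b)%:R),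
      (forall b c, \sum_(d in D) gamma a b d c = (c == b)%:R),
      (forall d d' c, d \in D -> d' \in D ->
         gamma a d d' c = ((d == d') && (c == d))%:R) &
      (forall b, exists d, exists d', [/\ d \in D, d' \in D &
         forall c, \sum_(be : B) gamma a b d' be * gamma a d be c
                   = (c == b)%:R])].

(* P3, as an identity in Z[v,v^-1,v',v'^-1], compared coefficientwise
   (coefficient of v^i v'^j) *)
Definition P3 : Prop :=
  forall b1 b2 b3 b4, same_cell b2 b4 -> forall i j : int,
    \sum_(be : B | same_cell be b2) r b1 b2 be i * r be b3 b4 j
    = \sum_(be : B | same_cell be b2) r b1 be b4 i * r b2 b3 be j.

Variable K : fieldType.
Variable u : K.

(* A_K = K (x)_A A : elements are K-linear combinations of the basis B *)
Definition mulK (x y : {ffun B -> K}) : {ffun B -> K} :=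
  [ffun c => \sum_(b : B) \sum_(b' : B) x b * y b' * lev u (r b b' c)].
Definition oneK (U : {set B}) : {ffun B -> K} := [ffun b => (b \in U)%:R].

(* A^infty_K = K (x)_Z A^infty : basis t_b *)
Definition mulInf (a : B -> nat) (x y : {ffun B -> K}) : {ffun B -> K} :=
  [ffun c => \sum_(b : B) \sum_(b' : B) x b * y b' * (gamma a b b' c)%:~R].
Definition oneInf (D : {set B}) : {ffun B -> K} := [ffun b => (b \in D)%:R].

Definition PhiK (D : {set B}) (x : {ffun B -> K}) : {ffun B -> K} :=
  [ffun c => \sum_(b : B) x b *
               \sum_(d in D | same_cell d c) lev u (r b d c)].

Definition left_idealK (I : {ffun B -> K} -> Prop) : Prop :=
  [/\ I 0, (forall x y, I x -> I y -> I (x + y)),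
      (forall (k : K) x, I x -> I [ffun b => k * x b]) &
      (forall x y, I y -> I (mulK x y))].

Definition semisimpleK : Prop :=
  forall I, left_idealK I -> exists J, [/\ left_idealK J,
    (forall x, I x -> J x -> x = 0) &
    (forall x, exists y z, [/\ I y, J z & x = y + z])].

End Based.

From HB Require Import structures.
From mathcomp Require Import all_boot all_order all_algebra.
From mathcomp Require Import finmap.
From mathcomp Require Import ring.
Import Order.TTheory GRing.Theory Num.Theory.
Set Implicit Arguments.
Unset Strict Implicit.
Unset Printing Implicit Defensive.
Local Open Scope ring_scope.

(* Phi_K is multiplicative by associativity and P3: modulo strictly lower cells,
   left multiplication by b on the cell of w is given by Phi(b) acting through the
   structure constants gamma of the asymptotic ring.  The same
   identity shows that an element of the kernel of Phi_K pushes the support of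
   anything it multiplies strictly down the cell order, so the kernel is a nilpotent
   left ideal and contains no nonzero idempotent.  In a semisimple algebra every
   left ideal is generated by an idempotent, hence the kernel is zero, and an
   injective linear endomorphism of the finite-dimensional space K^B is bijective. *)

Section LaurentEvaluation.
Variables (K : fieldType) (u : K).

Lemma lev_over (f : laurent) (S : {fset int}) :
  (finsupp f `<=` S)%fset -> lev u f = \sum_(i <- S) (f i)%:~R * u ^ i.
Proof.
move=> fS; apply: big_fset_incl => // i _ fi0.
by rewrite fsfun_dflt // mul0r.
Qed.

Lemma lev_eq0 (f : laurent) : lzero f -> lev u f = 0.
Proof. by move/eqP=> f0; rewrite /lev f0 big_seq_fset0. Qed.

Definition sumset (S : {fset int}) : {fset int} :=
  [fset (i + j)%R | i in S, j in S]%fset.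

Lemma sum_fset_shift (F : int -> K) (S : {fset int}) (i : int) :
  \sum_(m <- [fset (m + i)%R | m in S]%fset) F m = \sum_(m <- S) F (m + i).
Proof.
rewrite big_imfset /=; last by move=> x y _ _ /addIr.
by apply: perm_big; apply: uniq_perm; rewrite ?enum_finmem_uniq ?fset_uniq.
Qed.

Hypothesis u_neq0 : u != 0.

Lemma lev_lmul (f g : laurent) (S : {fset int}) :
  (finsupp f `<=` S)%fset -> (finsupp g `<=` S)%fset ->
  \sum_(n <- sumset S) (lmul f g n)%:~R * u ^ n = lev u f * lev u g.
Proof.
move=> fS gS; rewrite /lmul /lev.
under eq_bigr do rewrite rmorph_sum big_distrl /=.
rewrite exchange_big big_distrl /=; apply: eq_big_seq => i fi.
have iS : i \in S by apply: (fsubsetP fS).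
transitivity ((f i)%:~R * u ^ i *
   \sum_(n <- sumset S) (g (n - i))%:~R * u ^ (n - i)).
  rewrite big_distrr; apply: eq_bigr => n _ /=.
  rewrite intrM -!mulrA; congr (_ * _).
  by rewrite mulrCA -expfzDr // [i + _]addrC subrK.
congr (_ * _); rewrite -(@sum_fset_shift (fun m => (g m)%:~R * u ^ m) _ (- i)).
symmetry; apply: big_fset_incl => [|m _ gm0]; last first.
  by rewrite fsfun_dflt // mul0r.
apply/fsubsetP => m gm; apply/imfsetP; exists (m + i); last by rewrite addrK.
apply/imfset2P; exists i => //; exists m; last by rewrite addrC.
exact: (fsubsetP gS).
Qed.

End LaurentEvaluation.

Section Cells.
Variables (B : finType) (r : B -> B -> B -> laurent).

Lemma preceq_refl b : preceq r b b.
Proof. by apply/forallP => X; apply/implyP => /andP[]. Qed.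

Lemma preceq_trans x y z : preceq r x y -> preceq r y z -> preceq r x z.
Proof.
move=> /forallP xy /forallP yz; apply/forallP => X; apply/implyP => zX.
by apply: (implyP (xy X)); rewrite (implyP (yz X) zX); case/andP: zX.
Qed.

Lemma same_cell_refl b : same_cell r b b.
Proof. by rewrite /same_cell preceq_refl. Qed.

Lemma same_cellC x y : same_cell r x y = same_cell r y x.
Proof. by rewrite /same_cell andbC. Qed.

Lemma same_cell_trans x y z :
  same_cell r x y -> same_cell r y z -> same_cell r x z.
Proof.
case/andP=> xy yx /andP[yz zy].
by rewrite /same_cell (preceq_trans xy yz) (preceq_trans zy yx).
Qed.

Lemma same_cell_eqr x y : same_cell r x y -> forall z, same_cell r z x = same_cell r z y.
Proof.
move=> xy z; apply/idP/idP => [zx|zy]; first exact: same_cell_trans zx xy.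
by apply: same_cell_trans zy _; rewrite same_cellC.
Qed.

Lemma span_ideal_lzero X x y c : span_ideal r X -> x \in X -> c \notin X ->
  lzero (r x y c) && lzero (r y x c).
Proof.
move=> /forallP/(_ x)/forallP/(_ y)/forallP/(_ c)/implyP idX xX cX.
by apply: idX; rewrite xX.
Qed.

Lemma r_neq0_preceq x y c :
  ~~ lzero (r x y c) -> preceq r c x && preceq r c y.
Proof.
move=> rn0; apply/andP; split; apply/forallP => X; apply/implyP => /andP[inX idX];
  apply: contraNT rn0 => cX.
  by case/andP: (span_ideal_lzero y idX inX cX).
by case/andP: (span_ideal_lzero x idX inX cX).
Qed.

Definition height (w : B) : nat :=
  #|[set w' | preceq r w' w && ~~ preceq r w w']|.

Lemma height_lt w b : preceq r w b -> ~~ preceq r b w -> (height w < height b)%N.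
Proof.
move=> wb bw; apply: proper_card; apply/properP; split.
  apply/subsetP => w'; rewrite !inE => /andP[w'w ww'].
  rewrite (preceq_trans w'w wb) /=; apply: contra bw => bw'.
  exact: preceq_trans bw' w'w.
by exists w; rewrite !inE ?wb ?bw ?preceq_refl.
Qed.

Lemma gamma_cell a x y z :
  same_cell r x y -> same_cell r x z -> gamma r a x y z = r x y z (a x).
Proof. by rewrite /gamma => -> ->. Qed.

Lemma gamma_eq0 a x y z :
  ~~ (same_cell r x y && same_cell r x z) -> gamma r a x y z = 0.
Proof. by rewrite /gamma => /negbTE ->. Qed.

End Cells.

Section Specialization.
Variables (B : finType) (r : B -> B -> B -> laurent) (K : fieldType) (u : K).

Definition supp_r : {fset int} :=
  (0 |` \bigcup_(t <- enum {: B * B * B}) finsupp (r t.1.1 t.1.2 t.2))%fset.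

Lemma finsupp_r_sub b b' c : (finsupp (r b b' c) `<=` supp_r)%fset.
Proof.
apply: fsubset_trans (fsubsetUr _ _).
by apply: (bigfcup_sup (j := (b, b', c))); rewrite ?mem_enum.
Qed.

Lemma supp_r0 : 0 \in supp_r.
Proof. by rewrite !inE eqxx. Qed.

Lemma lev_r x y c : lev u (r x y c) = \sum_(i <- supp_r) (r x y c i)%:~R * u ^ i.
Proof. exact/lev_over/finsupp_r_sub. Qed.

Lemma lev_r_neq0_preceq x y c :
  lev u (r x y c) != 0 -> preceq r c x && preceq r c y.
Proof. by move=> rn0; apply: r_neq0_preceq; apply: contra rn0 => /lev_eq0 ->. Qed.

Lemma sum_supp_r_delta (P : bool) :
  \sum_(i <- supp_r) ((P && (i == 0))%:R : int)%:~R * u ^ i = P%:R.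
Proof.
case: P; last by rewrite big1 // => i _; rewrite mul0r.
rewrite (big_fsetD1 0) ?supp_r0 //= expr0z mulr1 big1_fset ?addr0 //.
by move=> i; rewrite !inE => /andP[/negbTE -> _] _; rewrite mul0r.
Qed.

Lemma lev_unitl U : compatible_with_one r U ->
  forall b c, \sum_(e in U) lev u (r e b c) = (c == b)%:R.
Proof.
case=> unitl _ _ _ b c; under eq_bigr do rewrite lev_r.
rewrite exchange_big /=.
by under eq_bigr do rewrite -big_distrl /= -rmorph_sum unitl; rewrite sum_supp_r_delta.
Qed.

Lemma lev_unitr U : compatible_with_one r U ->
  forall b c, \sum_(e in U) lev u (r b e c) = (c == b)%:R.
Proof.
case=> _ unitr _ _ b c; under eq_bigr do rewrite lev_r.
rewrite exchange_big /=.
by under eq_bigr do rewrite -big_distrl /= -rmorph_sum unitr; rewrite sum_supp_r_delta.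
Qed.

Lemma lev_P3 : P3 r -> forall b1 b2 b3 b4, same_cell r b2 b4 -> forall j : int,
  \sum_(be | same_cell r be b2) lev u (r b1 b2 be) * (r be b3 b4 j)%:~R
  = \sum_(be | same_cell r be b2) lev u (r b1 be b4) * (r b2 b3 be j)%:~R.
Proof.
move=> p3 b1 b2 b3 b4 b24 j.
have lev_r_mul x y z (k : int) :
    lev u (r x y z) * k%:~R = \sum_(i <- supp_r) (r x y z i * k)%:~R * u ^ i.
  by rewrite lev_r big_distrl /=; apply: eq_bigr => i _; rewrite intrM mulrAC.
under eq_bigr do rewrite lev_r_mul; under [RHS]eq_bigr do rewrite lev_r_mul.
rewrite exchange_big [RHS]exchange_big /=; apply: eq_bigr => i _.
by rewrite -!big_distrl /= -!rmorph_sum (p3 b1 b2 b3 b4 b24 i j).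
Qed.

Hypothesis u_neq0 : u != 0.

Lemma lev_assoc : associative_sc r -> forall b b' b'' c,
  \sum_be lev u (r b b' be) * lev u (r be b'' c)
  = \sum_be lev u (r b' b'' be) * lev u (r b be c).
Proof.
move=> assoc b b' b'' c.
have lev_r_mul x y z x' y' z' : lev u (r x y z) * lev u (r x' y' z') =
    \sum_(n <- sumset supp_r) (lmul (r x y z) (r x' y' z') n)%:~R * u ^ n.
  by rewrite lev_lmul ?finsupp_r_sub.
under eq_bigr do rewrite lev_r_mul; under [RHS]eq_bigr do rewrite lev_r_mul.
rewrite exchange_big [RHS]exchange_big /=; apply: eq_bigr => n _.
by rewrite -!big_distrl /= -!rmorph_sum assoc.
Qed.

End Specialization.

Section Homomorphism.
Variables (B : finType) (r : B -> B -> B -> laurent) (a : B -> nat) (D : {set B}).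
Variables (K : fieldType) (u : K).
Hypotheses (p1 : P1 r a) (p2 : P2 r a D) (p3 : P3 r).

Definition phi_basis (b z : B) : K :=
  \sum_(d in D | same_cell r d z) lev u (r b d z).

Lemma PhiKE x z : PhiK r u D x z = \sum_b x b * phi_basis b z.
Proof. by rewrite ffunE. Qed.

Lemma lev_P3_gamma b1 d bt w : same_cell r d w -> same_cell r bt w ->
  \sum_(z | same_cell r z w) lev u (r b1 d z) * (gamma r a z bt w)%:~R
  = \sum_(z | same_cell r z w) lev u (r b1 z w) * (gamma r a d bt z)%:~R.
Proof.
move=> dw btw; have wbt : same_cell r w bt by rewrite same_cellC.
have cell_d (F : B -> K) :
    \sum_(z | same_cell r z d) F z = \sum_(z | same_cell r z w) F z.
  exact: eq_bigl (same_cell_eqr dw).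
have := lev_P3 u p3 b1 bt dw (a w)%:Z; rewrite !cell_d => P3w.
transitivity (\sum_(z | same_cell r z w) lev u (r b1 d z) * (r z bt w (a w))%:~R).
  apply: eq_bigr => z zw.
  by rewrite gamma_cell ?(p1 zw); [|exact: same_cell_trans zw wbt|].
rewrite P3w; apply: eq_bigr => z zw.
rewrite gamma_cell ?(p1 dw) //; first exact: same_cell_trans dw wbt.
by apply: same_cell_trans dw _; rewrite same_cellC.
Qed.

Lemma lev_r_cell b1 bt w : same_cell r bt w ->
  lev u (r b1 bt w) = \sum_z phi_basis b1 z * (gamma r a z bt w)%:~R.
Proof.
move=> btw; have [p2l _ _ _] := p2.
have cell_w z (F : B -> K) : same_cell r z w ->
    \sum_(d in D | same_cell r d z) F d = \sum_(d in D | same_cell r d w) F d.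
  by move=> zw; apply: eq_bigl => d; rewrite (same_cell_eqr zw).
symmetry; transitivity (\sum_(z | same_cell r z w) phi_basis b1 z * (gamma r a z bt w)%:~R).
  rewrite [LHS](bigID (same_cell r ^~ w)) /= [X in _ + X]big1 ?addr0 // => z zw.
  by rewrite gamma_eq0 ?mulr0 //; apply: contra zw => /andP[].
transitivity (\sum_(d in D | same_cell r d w) \sum_(z | same_cell r z w)
                lev u (r b1 z w) * (gamma r a d bt z)%:~R).
  under eq_bigr => z zw do rewrite /phi_basis (cell_w z _ zw) big_distrl /=.
  rewrite exchange_big /=; apply: eq_bigr => d /andP[_ dw].
  exact: lev_P3_gamma.
have sum_gamma z : \sum_(d in D | same_cell r d w) gamma r a d bt z = (z == bt)%:R.
  rewrite -p2l [RHS](bigID (same_cell r ^~ w)) /= [X in _ = _ + X]big1 ?addr0 //.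
  move=> d /andP[_ dw]; rewrite gamma_eq0 //.
  by apply: contra dw => /andP[dbt _]; apply: same_cell_trans dbt btw.
rewrite exchange_big /=; under eq_bigr do rewrite -big_distrr /= -rmorph_sum sum_gamma.
rewrite (bigD1 bt btw) /= eqxx mulr1 big1 ?addr0 // => z /andP[_ /negbTE ->].
by rewrite mulr0.
Qed.

Lemma ker_act_cell x b' w : PhiK r u D x = 0 -> same_cell r b' w ->
  \sum_b x b * lev u (r b b' w) = 0.
Proof.
move=> x0 b'w; under eq_bigr do rewrite (lev_r_cell _ b'w) big_distrr /=.
rewrite exchange_big big1 //= => z _.
under eq_bigr do rewrite mulrA.
by rewrite -big_distrl /= -PhiKE x0 ffunE mul0r.
Qed.

Definition supported_below (k : nat) (y : {ffun B -> K}) : Prop :=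
  forall b, (k <= height r b)%N -> y b = 0.

(* Modulo elements strictly below its cell, [x] acts on a basis element through
   [PhiK x], which vanishes. *)
Lemma ker_mul_supported_below x y k : PhiK r u D x = 0 ->
  supported_below k.+1 y -> supported_below k (mulK r u x y).
Proof.
move=> x0 y_below w kw; rewrite ffunE exchange_big big1 //= => b' _.
have [y0|y_neq0] := eqVneq (y b') 0.
  by apply: big1 => b _; rewrite y0 mulr0 mul0r.
have b'k : (height r b' <= k)%N.
  by rewrite leqNgt; apply: contra y_neq0 => kb'; apply/eqP/y_below.
have [wb'|wb'] := boolP (preceq r w b'); last first.
  apply: big1 => b _.
  have [->|/lev_r_neq0_preceq/andP[_ wb]] := eqVneq (lev u (r b b' w)) 0.
    by rewrite mulr0.
  by rewrite wb in wb'.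
have [b'w|b'w] := boolP (preceq r b' w); last first.
  by have := height_lt wb' b'w; rewrite ltnNge (leq_trans b'k kw).
transitivity (y b' * \sum_b x b * lev u (r b b' w)).
  by rewrite big_distrr /=; apply: eq_bigr => b _; ring.
by rewrite ker_act_cell ?mulr0 // /same_cell b'w wb'.
Qed.

Lemma ker_idempotent_eq0 e : PhiK r u D e = 0 -> mulK r u e e = e -> e = 0.
Proof.
move=> e0 ee; have e_pow n : iter n (mulK r u e) e = e.
  by elim: n => //= n ->.
have below n : supported_below (#|B|.+1 - n) (iter n (mulK r u e) e).
  elim: n => [|n IHn] /=; first by move=> b; rewrite subn0 ltnNge max_card.
  apply: ker_mul_supported_below => //.
  case: (leqP n #|B|) => [n_le|n_gt]; first by rewrite subnSK.
  by move=> b _; apply: IHn; move: n_gt; rewrite -subn_eq0 => /eqP ->.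
by apply/ffunP => b; rewrite ffunE -(e_pow #|B|.+1); apply: below; rewrite subnn.
Qed.

Hypotheses (u_neq0 : u != 0) (assoc : associative_sc r).

Lemma phi_basis_mul b b' w :
  \sum_c lev u (r b b' c) * phi_basis c w
  = \sum_z \sum_bt phi_basis b z * phi_basis b' bt * (gamma r a z bt w)%:~R.
Proof.
transitivity (\sum_(d in D | same_cell r d w) \sum_(bt | same_cell r bt w)
                lev u (r b' d bt) * lev u (r b bt w)).
  rewrite /phi_basis; under eq_bigr do rewrite big_distrr /=.
  rewrite exchange_big /=; apply: eq_bigr => d /andP[_ dw].
  rewrite lev_assoc // (bigID (same_cell r ^~ w)) /= [X in _ + X]big1 ?addr0 // => bt btw.
  have [->|bt_d] := eqVneq (lev u (r b' d bt)) 0; first by rewrite mul0r.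
  have [->|w_bt] := eqVneq (lev u (r b bt w)) 0; first by rewrite mulr0.
  case/negP: btw; apply/andP; split; last by case/andP: (lev_r_neq0_preceq w_bt).
  apply: preceq_trans (_ : preceq r d w); last by case/andP: dw.
  by case/andP: (lev_r_neq0_preceq bt_d).
rewrite exchange_big /=.
transitivity (\sum_(bt | same_cell r bt w) \sum_z
                phi_basis b z * phi_basis b' bt * (gamma r a z bt w)%:~R).
  apply: eq_bigr => bt btw.
  have phi_cell : phi_basis b' bt = \sum_(d in D | same_cell r d w) lev u (r b' d bt).
    by apply: eq_bigl => d; rewrite (same_cell_eqr btw).
  rewrite -big_distrl /= -phi_cell (lev_r_cell _ btw) big_distrr /=.
  by apply: eq_bigr => z _; rewrite mulrCA mulrA.
rewrite [RHS]exchange_big /= [RHS](bigID (same_cell r ^~ w)) /= [X in _ = _ + X]big1 ?addr0 //.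
move=> bt btw; apply: big1 => z _; rewrite gamma_eq0 ?mulr0 //.
by apply: contra btw => /andP[zbt zw]; apply: same_cell_trans zw; rewrite same_cellC.
Qed.

Lemma PhiK_mul x y :
  PhiK r u D (mulK r u x y) = mulInf r a (PhiK r u D x) (PhiK r u D y).
Proof.
apply/ffunP => w; rewrite PhiKE ffunE.
transitivity (\sum_b \sum_b' x b * y b' *
                \sum_c lev u (r b b' c) * phi_basis c w).
  under eq_bigr do rewrite ffunE big_distrl /=; rewrite exchange_big /=.
  apply: eq_bigr => b _; under eq_bigr do rewrite big_distrl /=; rewrite exchange_big /=.
  by apply: eq_bigr => b' _; rewrite big_distrr /=; apply: eq_bigr => c _; rewrite !mulrA.
rewrite pair_bigA [RHS]pair_bigA /=.
under eq_bigr do rewrite phi_basis_mul pair_bigA big_distrr /=.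
rewrite exchange_big /=; apply: eq_bigr => q _.
rewrite !PhiKE big_distrlr big_distrl /=; under [RHS]eq_bigr do rewrite big_distrl.
by rewrite [RHS]pair_bigA; apply: eq_bigr => p _ /=; ring.
Qed.

End Homomorphism.

Section SemisimpleIdeals.
Variables (B : finType) (r : B -> B -> B -> laurent) (K : fieldType) (u : K).

Lemma mulKDr x y z : mulK r u x (y + z) = mulK r u x y + mulK r u x z.
Proof.
apply/ffunP => c; rewrite !ffunE -big_split; apply: eq_bigr => b _ /=.
by rewrite -big_split; apply: eq_bigr => b' _ /=; rewrite ffunE; ring.
Qed.

Lemma mulKr0 x : mulK r u x 0 = 0.
Proof.
apply/ffunP => c; rewrite !ffunE big1 // => b _; rewrite big1 // => b' _.
by rewrite ffunE mulr0 mul0r.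
Qed.

Lemma mulKr1 U : compatible_with_one r U -> forall x, mulK r u x (oneK K U) = x.
Proof.
move=> one x; apply/ffunP => c; rewrite ffunE.
transitivity (\sum_b x b * \sum_(e in U) lev u (r b e c)).
  apply: eq_bigr => b _; rewrite big_distrr /= [RHS]big_mkcond /=.
  by apply: eq_bigr => e _; rewrite ffunE; case: (e \in U); rewrite ?mulr1 ?mulr0 ?mul0r.
under eq_bigr do rewrite (lev_unitr u one).
rewrite (bigD1 c) //= eqxx mulr1 big1 ?addr0 // => b /negbTE.
by rewrite eq_sym => ->; rewrite mulr0.
Qed.

Lemma left_idealK_sub I x y : left_idealK r u I -> I x -> I y -> I (x - y).
Proof.
case=> _ Iadd Iscale _ Ix Iy; have := Iadd _ _ Ix (Iscale (-1) _ Iy).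
by congr I; apply/ffunP => b; rewrite !ffunE mulN1r.
Qed.

(* A complement [J] of [I] yields [1 = e + f] with [e] a right unit for [I]. *)
Lemma semisimple_left_ideal_eq0 U I : compatible_with_one r U -> semisimpleK r u ->
  left_idealK r u I -> (forall e, I e -> mulK r u e e = e -> e = 0) ->
  forall x, I x -> x = 0.
Proof.
move=> one semi idI idem0; have [J [idJ IJ0 dec]] := semi I idI.
have [e [f [Ie Jf ef]]] := dec (oneK K U).
have [_ _ _ Imul] := idI; have [_ _ _ Jmul] := idJ.
have xe x : I x -> mulK r u x e = x.
  move=> Ix; have xf : mulK r u x f = x - mulK r u x e.
    by apply/esym; rewrite -{1}(mulKr1 one x) ef mulKDr addrAC subrr add0r.
  have /eqP : mulK r u x f = 0.
    by apply: IJ0; [rewrite xf; apply: left_idealK_sub (Imul _ _ Ie) | apply: Jmul].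
  by rewrite xf subr_eq0 eq_sym => /eqP.
by move=> x Ix; rewrite -(xe x Ix) (idem0 e Ie (xe e Ie)) mulKr0.
Qed.

End SemisimpleIdeals.

Lemma linear_inj_bij (K : fieldType) (V : vectType K) (f : V -> V) :
  (forall k x y, f (k *: x + y) = k *: f x + f y) -> injective f -> bijective f.
Proof.
move=> f_lin f_inj.
pose fl : {linear V -> V} := HB.pack f (GRing.isLinear.Build _ _ _ _ f f_lin).
have f_onto y : exists x, f x == y.
  have : y \in limg (linfun fl).
    rewrite lker0_limgf ?memvf //; apply/lker0P => x1 x2.
    by rewrite !lfunE; apply: f_inj.
  by case/memv_imgP => x _ ->; exists x; rewrite lfunE.
exists (fun y => xchoose (f_onto y)) => [x|y]; last exact/eqP/(xchooseP (f_onto y)).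
by apply: f_inj; apply/eqP/(xchooseP (f_onto (f x))).
Qed.

Section PhiKLinear.
Variables (B : finType) (r : B -> B -> B -> laurent) (D : {set B}).
Variables (K : fieldType) (u : K).

Lemma PhiK_linear k (x y : {ffun B -> K^o}) :
  PhiK r u D (k *: x + y) = k *: (PhiK r u D x : {ffun B -> K^o}) + PhiK r u D y.
Proof.
apply/ffunP => c; rewrite !ffunE /= scaler_sumr -big_split /=.
by apply: eq_bigr => b _; rewrite !ffunE /= mulrDl scalerAl.
Qed.

Lemma PhiK0 : PhiK r u D 0 = 0.
Proof. by apply/ffunP => c; rewrite !ffunE big1 // => b _; rewrite ffunE mul0r. Qed.

Lemma PhiK_one U : compatible_with_one r U -> PhiK r u D (oneK K U) = oneInf K D.
Proof.
move=> one; apply/ffunP => c; rewrite !ffunE.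
transitivity (\sum_(d in D | same_cell r d c) \sum_(e in U) lev u (r e d c)).
  rewrite exchange_big /= [RHS]big_mkcond /=; apply: eq_bigr => e _.
  by rewrite ffunE; case: (e \in U); rewrite ?mul1r ?mul0r.
under eq_bigr do rewrite (lev_unitl u one).
have [cD|cD] := boolP (c \in D); last first.
  by rewrite big1 // => d /andP[dD _]; case: eqP => // cd; rewrite cd dD in cD.
rewrite (bigD1 c) /= ?cD ?same_cell_refl // eqxx big1 ?addr0 // => d /andP[_ /negbTE].
by rewrite eq_sym => ->.
Qed.

End PhiKLinear.

Lemma ker_PhiK_left_ideal (B : finType) (r : B -> B -> B -> laurent) a D
    (K : fieldType) (u : K) :
  u != 0 -> associative_sc r -> P1 r a -> P2 r a D -> P3 r ->
  left_idealK r u (fun x => PhiK r u D x = 0).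
Proof.
move=> u_neq0 assoc p1 p2 p3; split.
- exact: PhiK0.
- by move=> x y x0 y0; have := PhiK_linear r D u 1 x y; rewrite !scale1r x0 y0 addr0.
- move=> k x x0.
  have -> : [ffun b => k * x b] = k *: (x : {ffun B -> K^o}) + 0.
    by apply/ffunP => b; rewrite addr0 !ffunE.
  by rewrite PhiK_linear x0 PhiK0 scaler0 addr0.
- move=> x y y0; rewrite (PhiK_mul p1 p2 p3 u_neq0 assoc) y0.
  apply/ffunP => c; rewrite !ffunE big1 // => b _; rewrite big1 // => b' _.
  by rewrite !ffunE mulr0 mul0r.
Qed.

Theorem mainTheorem7 (B : finType) (r : B -> B -> B -> laurent)
    (U : {set B}) (a : B -> nat) (D : {set B})
    (K : fieldType) (u : K) :
  associative_sc r ->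
  compatible_with_one r U ->
  is_a_function r a ->
  P1 r a ->
  P2 r a D ->
  P3 r ->
  u != 0 ->
  semisimpleK r u ->
  [/\ bijective (PhiK r u D),
      (forall x y, PhiK r u D (mulK r u x y)
                   = mulInf r a (PhiK r u D x) (PhiK r u D y)) &
      PhiK r u D (oneK K U) = oneInf K D].
Proof.
move=> assoc one _ p1 p2 p3 u_neq0 semi.
split; [|exact: (PhiK_mul p1 p2 p3 u_neq0 assoc)|exact: PhiK_one].
have ker0 := semisimple_left_ideal_eq0 one semi
  (ker_PhiK_left_ideal u_neq0 assoc p1 p2 p3) (ker_idempotent_eq0 p1 p2 p3).
apply: (@linear_inj_bij K {ffun B -> K^o}); first exact: PhiK_linear.
move=> x y Pxy; apply/eqP; rewrite -subr_eq0; apply/eqP/ker0.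
have := PhiK_linear r D u (-1) (y : {ffun B -> K^o}) x.
by rewrite !scaleN1r addrC => ->; rewrite Pxy addNr.
Qed.
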